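(* Let $n\ge1$ and $\sigma\in\mathfrak{S}_n$. Then $\Delta(\sigma')\sqsubset\Delta(\sigma)$. Moreover: if $\Delta(\sigma')$ is a prefix of $\Delta(\sigma)$, then $\sigma$ is obtained from $\sigma'$ by inserting $n$ in the last position. Otherwise, let $k$ be the index of the first step at which the paths $\Delta(\sigma')$ and $\Delta(\sigma)$ differ; if $k$ is odd, $\sigma$ is obtained from $\sigma'$ by inserting $n$ immediately after the letter $\frac{k+1}{2}$, and if $k$ is even, $\sigma$ is obtained from $\sigma'$ by inserting $n$ immediately before the letter $\frac{k}{2}$.
   Context: Permutations $\sigma\in\mathfrak{S}_n$ are written as words $\sigma_1\cdots\sigma_n$, with the conventions $\sigma_0=0$, $\sigma_{n+1}=n+1$. A value $\sigma_i$ ($1\le i\le n$) is a peak if $\sigma_{i-1}<\sigma_i>\sigma_{i+1}$, a valley if $\sigma_{i-1}>\sigma_i<\sigma_{i+1}$, a double ascent if $\sigma_{i-1}<\sigma_i<\sigma_{i+1}$, a double descent if $\sigma_{i-1}>\sigma_i>\sigma_{i+1}$. The profile $\Delta(\sigma)$ is the word $w_1\cdots w_{2n}$ over $\{\nearrow,\searrow\}$ where, for each value $j\in\{1,\dots,n\}$, $w_{2j-1}w_{2j}$ is $\nearrow\nearrow$ if $j$ is a valley, $\searrow\searrow$ if $j$ is a peak, $\nearrow\searrow$ if $j$ is a double ascent, $\searrow\nearrow$ if $j$ is a double descent; it is a Dyck path of length $2n$ (the empty permutation has the empty profile). $\sigma'\in\mathfrak{S}_{n-1}$ is the word obtained from $\sigma$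 by deleting the letter $n$. A Dyck path of length $2m$ is a lattice path from $(0,0)$ to $(2m,0)$ with steps $\nearrow=(1,1)$, $\searrow=(1,-1)$ never going below the $x$-axis; $P(x)$ denotes its height at abscissa $x$. A cell is a point $(a,b)\in\mathbb{Z}^2$ with $b\ge0$, $a+b$ even (the tilted square with vertices $(a,b),(a+1,b\pm1),(a+2,b)$). The Dyck shape of $P$ (length $2m$) is $S(P)=\{(a,b): b\ge0,\ a+b\text{ even},\ 0\le a\le 2m-2,\ b+1\le P(a+1)\}$. Cells are adjacent if they differ by $(\pm1,\pm1)$. A ribbon is a nonempty set of cells, connected for adjacency, containing no four cells $(a,b),(a+1,b+1),(a+1,b-1),(a+2,b)$. For Dyck paths $D$ of length $2m$ and $E$ of length $2m+2$, $D\sqsubset E$ means $S(D)\subseteq S(E)$ and $S(E)\setminus S(D)$ is a ribbon. *)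

From mathcomp Require Import all_boot all_order all_algebra.
Set Implicit Arguments. Unset Strict Implicit. Unset Printing Implicit Defensive.
Import GRing.Theory Num.Theory.

(* Permutations of {1..n} are represented as words: seq nat that are
   permutations of [:: 1; ...; n].  Convention sigma_0 = 0, sigma_{n+1} = n+1. *)
Definition is_perm_word (n : nat) (s : seq nat) : bool := perm_eq s (iota 1 n).

Definition sigma_prime (s : seq nat) : seq nat := rem (size s) s.

Definition prev_val (s : seq nat) (j : nat) : nat := nth 0 (0 :: s) (index j s).
Definition next_val (s : seq nat) (j : nat) : nat :=
  nth (size s).+1 s (index j s).+1.

Definition is_peak s j := (prev_val s j < j) && (j > next_val s j).
Definition is_valley s j := (prev_val s j > j) && (j < next_val s j).
Definition is_dasc s j := (prev_val s j < j) && (j < next_val s j).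
Definition is_ddesc s j := (prev_val s j > j) && (j > next_val s j).

(* Steps: true = up-step (1,1), false = down-step (1,-1). *)
Definition profile_steps (s : seq nat) (j : nat) : seq bool :=
  if is_valley s j then [:: true; true]
  else if is_peak s j then [:: false; false]
  else if is_dasc s j then [:: true; false]
  else [:: false; true].

Definition profile (s : seq nat) : seq bool :=
  flatten [seq profile_steps s j | j <- iota 1 (size s)].

Definition height (P : seq bool) (x : nat) : int :=
  (\sum_(i < x) (if nth false P i then 1 else -1))%R.

Definition dyck (P : seq bool) : bool :=
  [forall x : 'I_(size P).+1, (0 <= height P x)%R] && (height P (size P) == 0%R).

(* Cells (a,b) with a,b >= 0 (only such cells occur in Dyck shapes). *)
Definition cell := (nat * nat)%type.

Definition in_shape (P : seq bool) (c : cell) : bool :=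
  [&& ~~ odd (c.1 + c.2), c.1 + 2 <= size P & (c.2.+1%:Z <= height P c.1.+1)%R].

Definition adj (c d : cell) : bool :=
  ((d.1 == c.1.+1) || (c.1 == d.1.+1)) && ((d.2 == c.2.+1) || (c.2 == d.2.+1)).

Definition ribbon (R : pred cell) : Prop :=
  (exists c, R c) /\
  (forall x y, R x -> R y -> exists p : seq cell,
      [&& path adj x p, last x p == y & all R p]) /\
  (* no four cells (a,b),(a+1,b+1),(a+1,b-1),(a+2,b) *)
  (forall a b : nat,
      ~~ [&& R (a, b.+1), R (a.+1, b.+2), R (a.+1, b) & R (a.+2, b.+1)]).

Definition ribbon_sub (D E : seq bool) : Prop :=
  [/\ dyck D, dyck E, size E = (size D + 2)%N,
      (forall c, in_shape D c -> in_shape E c) &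
      ribbon (fun c => in_shape E c && ~~ in_shape D c)].

From mathcomp Require Import all_boot all_order all_algebra zify.
Set Implicit Arguments. Unset Strict Implicit. Unset Printing Implicit Defensive.
Import Order.TTheory GRing.Theory Num.Theory.

(* Write σ = u n v, so that σ' = u v.  Inserting n changes only the right
   neighbour of x = last u and the left neighbour of y = head v, and it makes
   both comparisons x < next x and y < prev y true.  As x and y are adjacent
   in σ', exactly one of them was false before: the first step of x if y < x,
   the second step of y if x < y.  The letter n itself contributes ↘↘ (↗↘ if it
   is the last letter).  So Δ(σ) is Δ(σ') with one down step turned up and two
   steps appended; from that step on Δ(σ) runs two units higher, and the new
   cells form the strip directly below Δ(σ), one per column: a ribbon.  The
   position of the flipped step tells where n was inserted. *)

(** * Heights and cell paths *)

Lemma height0 P : height P 0 = 0%R.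
Proof. by rewrite /height big_ord0. Qed.

Lemma height_up P x : nth false P x -> height P x.+1 = (height P x + 1)%R.
Proof. by move=> H; rewrite /height big_ord_recr /= H. Qed.

Lemma height_down P x : nth false P x = false -> height P x.+1 = (height P x - 1)%R.
Proof. by move=> H; rewrite /height big_ord_recr /= H. Qed.

Lemma height_parity P x : exists z : int, height P x = (x%:Z - 2 * z)%R.
Proof.
elim: x => [|x [z Hz]]; first by exists 0%R; rewrite height0.
case E: (nth false P x).
  by exists z; rewrite height_up // Hz; lia.
by exists (z + 1)%R; rewrite height_down // Hz; lia.
Qed.

Lemma dyck_height P :
  dyck P <-> (forall x, x <= size P -> (0 <= height P x)%R) /\ height P (size P) = 0%R.
Proof.
split=> [/andP [/forallP H /eqP H0]|[H H0]].
  by split=> // x Hx; have := H (Ordinal (Hx : x < (size P).+1)).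
by apply/andP; split; [apply/forallP=> x; apply: H; rewrite -ltnS | apply/eqP].
Qed.

Definition linked (R : pred cell) (x y : cell) :=
  exists q, [&& path adj x q, last x q == y & all R q].

Lemma linked_trans R x y z : linked R x y -> linked R y z -> linked R x z.
Proof.
move=> [q1 /and3P [P1 /eqP L1 A1]] [q2 /and3P [P2 /eqP L2 A2]].
by exists (q1 ++ q2); rewrite cat_path last_cat L1 P1 P2 L2 all_cat A1 A2 eqxx.
Qed.

Lemma linked_adj (R : pred cell) x y : adj x y -> R y -> linked R x y.
Proof. by move=> A Ry; exists [:: y]; rewrite /= A Ry eqxx. Qed.

(** * Turning one down step up *)

Section FlipDownStep.

Variables (D E : seq bool) (p : nat).
Hypotheses (size_E : size E = (size D).+2) (p_le : p <= size D)
  (nth_E_off : forall i, i < size D -> i != p -> nth false E i = nth false D i)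
  (nth_flip : p < size D -> nth false D p = false /\ nth false E p = true)
  (nth_E_end : nth false E (size D) = (p == size D))
  (nth_E_last : nth false E (size D).+1 = false).
(* That is, [E] is [D] with its down step at [p] turned up, followed by ↘↘;
   or [p = size D] and [E] is [D] followed by ↗↘. *)

Lemma height_flip x : x <= size D ->
  height E x = (height D x + (if (p < x)%N then 2 else 0))%R.
Proof.
elim: x => [|x IH] Hx; first by rewrite !height0.
have [Exp|Hxp] := eqVneq x p.
  subst x; have [HD HE] := nth_flip Hx.
  rewrite height_up // height_down // IH ?ltnn ?ltnSn /=; lia.
have -> : (p < x.+1) = (p < x) by lia.
have HE := nth_E_off Hx Hxp; case ED: (nth false D x).
  by rewrite height_up ?HE // height_up // IH; [case: (p < x); lia | lia].
by rewrite height_down ?HE // height_down // IH; [case: (p < x); lia | lia].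
Qed.

Hypothesis dyck_D : dyck D.

Let height_D_ge0 x : x <= size D -> (0 <= height D x)%R.
Proof. by case/dyck_height: dyck_D => H _; apply: H. Qed.

Let height_D_end : height D (size D) = 0%R.
Proof. by case/dyck_height: dyck_D. Qed.

Lemma height_flip_end1 : height E (size D).+1 = 1%R.
Proof.
case: (ltngtP p (size D)) => Hc; try lia.
  rewrite height_down; last by rewrite nth_E_end; apply/eqP; lia.
  by rewrite height_flip // height_D_end Hc; lia.
by rewrite height_up ?nth_E_end ?Hc // height_flip // height_D_end Hc ltnn; lia.
Qed.

Lemma height_flip_end : height E (size D).+2 = 0%R.
Proof. by rewrite height_down // height_flip_end1; lia. Qed.

Lemma dyck_flip : dyck E.
Proof.
apply/dyck_height; rewrite size_E; split=> [x Hx|]; last exact: height_flip_end.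
case: (leqP x (size D)) => H1.
  by rewrite height_flip //; have := height_D_ge0 H1; case: (p < x); lia.
have [->|->] : x = (size D).+1 \/ x = (size D).+2 by lia.
  by rewrite height_flip_end1.
by rewrite height_flip_end.
Qed.

Lemma in_shape_flip c : in_shape D c -> in_shape E c.
Proof.
case: c => a b; rewrite /in_shape /= size_E => /and3P [H1 H2 H3].
apply/and3P; split=> //; first by lia.
by rewrite height_flip; [case: (p < a.+1); lia | lia].
Qed.

Lemma in_shape_flip_before a b : a < p -> in_shape E (a, b) -> in_shape D (a, b).
Proof.
move=> Hap; rewrite /in_shape /= => /and3P [Hod _].
rewrite height_flip ?ifF; try lia.
move=> Hb; have [Ea|Ha] : a.+1 = size D \/ a + 2 <= size D by lia.
  by move: Hb; rewrite Ea height_D_end; lia.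
by apply/and3P; split=> //; lia.
Qed.

Lemma in_shape_flip_below a b : p <= a -> (b.+3%:Z <= height E a.+1)%R ->
  in_shape E (a, b) -> in_shape D (a, b).
Proof.
move=> Hpa Hb; rewrite /in_shape /= size_E => /and3P [Hod Ha _].
have [Ea|Ha1] : a = size D \/ a.+1 <= size D by lia.
  by move: Hb; rewrite Ea height_flip_end1; lia.
move: Hb; rewrite height_flip ?ifT; try lia.
move=> Hb; have [Ea|Ha2] : a.+1 = size D \/ a + 2 <= size D by lia.
  by move: Hb; rewrite Ea height_D_end; lia.
by apply/and3P; split=> //; lia.
Qed.

Let skew c := in_shape E c && ~~ in_shape D c.

(* Beyond column [p] the path [E] runs exactly two units above [D], so each
   column from [p] on gains exactly the one cell lying directly below [E]. *)
Lemma skewE a b :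
  skew (a, b) = (p <= a <= size D) && (b.+1%:Z == height E a.+1)%R.
Proof.
have [z Hz] := height_parity E a.+1.
apply/idP/idP.
  case/andP=> HE HnD; move: (HE); rewrite /in_shape /= size_E => /and3P [Hod Ha Hb].
  have Hpa : p <= a.
    by case: ltnP => // Hap; case/negP: HnD; exact: in_shape_flip_before.
  rewrite Hpa /=; apply/andP; split; first by lia.
  apply/eqP.
  have [//|Hlt] : (b.+1%:Z = height E a.+1 \/ b.+3%:Z <= height E a.+1)%R by lia.
  by case/negP: HnD; exact: in_shape_flip_below.
case/andP=> /andP [Hpa Ha] /eqP Hb; rewrite /skew /in_shape /= size_E -Hb lexx andbT.
have -> /= : ~~ odd (a + b) by lia.
apply/andP; split; first by lia.
by apply/negP=> /andP [Ha2 HD]; move: HD Hb; rewrite height_flip ?ifT; lia.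
Qed.

Lemma height_flip_pos a : p <= a <= size D -> (1 <= height E a.+1)%R.
Proof.
case/andP=> H1 H2; case: (ltngtP a (size D)) => Ha; try lia.
  rewrite height_flip; last by lia.
  have -> : p < a.+1 by lia.
  have := @height_D_ge0 a.+1 ltac:(lia); lia.
by rewrite Ha height_flip_end1.
Qed.

Definition top_cell a : cell := (a, (absz (height E a.+1)).-1).

Lemma skew_top_cell a : p <= a <= size D -> skew (top_cell a).
Proof. by move=> H; rewrite /top_cell skewE H /=; apply/eqP; have := height_flip_pos H; lia. Qed.

Lemma skew_cellE c : skew c -> p <= c.1 <= size D /\ c = top_cell c.1.
Proof.
case: c => a b; rewrite skewE => /andP [H /eqP Hb]; split=> //.
by rewrite /top_cell /=; congr (_, _); lia.
Qed.

Lemma adj_top_cell a : p <= a < size D ->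
  adj (top_cell a) (top_cell a.+1) /\ adj (top_cell a.+1) (top_cell a).
Proof.
move=> Ha; have P1 := @height_flip_pos a ltac:(lia).
have := @height_flip_pos a.+1 ltac:(lia).
rewrite /adj /top_cell /= eqxx /= orbT /=.
case Eb: (nth false E a.+1).
  by rewrite !(height_up Eb) => P2; split; apply/orP; lia.
by rewrite !(height_down Eb) => P2; split; apply/orP; lia.
Qed.

Lemma linked_top_cells a d : p <= a -> a + d <= size D ->
  linked skew (top_cell a) (top_cell (a + d)) /\ linked skew (top_cell (a + d)) (top_cell a).
Proof.
move=> Ha; elim: d => [|d IH] Hd.
  by rewrite addn0; split; exists [::]; rewrite /= eqxx.
have [I1 I2] := IH ltac:(lia).
have [A1 A2] := @adj_top_cell (a + d) ltac:(lia).
rewrite addnS; split.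
  by apply: linked_trans I1 (linked_adj A1 _); apply: skew_top_cell; lia.
by apply: linked_trans (linked_adj A2 _) I2; apply: skew_top_cell; lia.
Qed.

Lemma ribbon_skew : ribbon skew.
Proof.
split; [|split].
- by exists (top_cell (size D)); apply: skew_top_cell; lia.
- move=> x y /skew_cellE [Hx ->] /skew_cellE [Hy ->].
  case: (leqP x.1 y.1) => Hxy.
    have [+ _] := @linked_top_cells x.1 (y.1 - x.1) ltac:(lia) ltac:(lia).
    by rewrite subnKC.
  have [_] := @linked_top_cells y.1 (x.1 - y.1) ltac:(lia) ltac:(lia).
  by rewrite subnKC // ltnW.
- move=> a b; apply/negP => /and4P [_ H1 H2 _].
  by move: H1 H2; rewrite !skewE => /andP [_ /eqP E1] /andP [_ /eqP E2]; lia.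
Qed.

Lemma ribbon_sub_flip : ribbon_sub D E.
Proof.
by split; [| exact: dyck_flip | rewrite size_E addn2 | exact: in_shape_flip | exact: ribbon_skew].
Qed.

End FlipDownStep.

(** * Profiles read off neighbours *)

Definition neighbour_steps (s : seq nat) j := [:: j < next_val s j; j < prev_val s j].

Lemma notin_uniq_mid (T : eqType) (a b : seq T) (j : T) :
  uniq (a ++ j :: b) -> j \notin a /\ j \notin b.
Proof. by rewrite cat_uniq /= => /and3P [_ /norP [Hja _] /andP [Hjb _]]. Qed.

Lemma prev_val_cat a j b : j \notin a -> prev_val (a ++ j :: b) j = last 0 a.
Proof.
move=> H; rewrite /prev_val index_cat (negbTE H) /= eqxx addn0.
rewrite -cat_cons nth_cat /= ltnSn.
by case: a {H} => [|c a] //=; rewrite -[RHS]/(last 0 (c :: a)) -nth_last.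
Qed.

Lemma next_val_cat a j b : j \notin a ->
  next_val (a ++ j :: b) j = head (size (a ++ j :: b)).+1 b.
Proof.
move=> H; rewrite /next_val index_cat (negbTE H) /= eqxx addn0.
by rewrite nth_cat ltnNge leqnSn /= subSn // subnn; case: b.
Qed.

Lemma profile_stepsE s j : j != 0 -> (forall x, x \in s -> x <= size s) -> uniq s ->
  j \in s -> profile_steps s j = neighbour_steps s j.
Proof.
move=> Hj0 Hle Hu /splitPr Hs; case: Hs Hle Hu => a b Hle Hu.
have [Ha Hb] := notin_uniq_mid Hu.
have Hjle : j <= size (a ++ j :: b) by apply: Hle; rewrite mem_cat mem_head orbT.
rewrite /neighbour_steps /profile_steps /is_valley /is_peak /is_dasc /is_ddesc.
rewrite prev_val_cat // next_val_cat //.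
have Hp : last 0 a != j.
  apply/eqP=> Hl; have := mem_last 0 a; rewrite Hl inE (negbTE Ha) orbF.
  by rewrite (negbTE Hj0).
have Hn : head (size (a ++ j :: b)).+1 b != j.
  case: b Hb Hjle {Hu Hle} => [|c b] Hb Hjle /=; first by rewrite neq_ltn ltnS Hjle orbT.
  by apply/eqP=> Hc; move: Hb; rewrite -Hc mem_head.
move: Hp Hn; set P := last 0 a; set N := head _ b.
by case: (ltngtP P j); case: (ltngtP j N).
Qed.

Lemma size_flatten_pairs (F : nat -> seq bool) a k : (forall j, size (F j) = 2) ->
  size (flatten (map F (iota a k))) = 2 * k.
Proof. by move=> HF; elim: k a => [|k IH] a //=; rewrite size_cat HF IH; lia. Qed.

Lemma nth_flatten_pairs (F : nat -> seq bool) a k i : (forall j, size (F j) = 2) ->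
  i < 2 * k -> nth false (flatten (map F (iota a k))) i = nth false (F (a + i./2)) (odd i).
Proof.
move=> HF; elim: k a i => [|k IH] a i; first by lia.
move=> Hi /=; rewrite nth_cat HF.
case: i Hi => [|[|i]] Hi /=; rewrite ?addn0 //.
rewrite IH; last by lia.
have -> : i.+2 - 2 = i by lia.
by rewrite negbK; congr (nth _ (F _) _); lia.
Qed.

Lemma size_profile_steps s j : size (profile_steps s j) = 2.
Proof. by rewrite /profile_steps; repeat case: ifP. Qed.

Lemma size_profile s : size (profile s) = 2 * size s.
Proof. exact: size_flatten_pairs (size_profile_steps s). Qed.

Lemma nth_profile s i : perm_eq s (iota 1 (size s)) -> i < 2 * size s ->
  nth false (profile s) i = nth false (neighbour_steps s (i./2).+1) (odd i).
Proof.
move=> Hp Hi; rewrite /profile nth_flatten_pairs //; last exact: size_profile_steps.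
rewrite add1n profile_stepsE //.
- by move=> x; rewrite (perm_mem Hp) mem_iota /=; lia.
- by rewrite (perm_uniq Hp) iota_uniq.
- by rewrite (perm_mem Hp) mem_iota; lia.
Qed.

Lemma rem_cat_notin (T : eqType) (x : T) u v : x \notin u -> rem x (u ++ x :: v) = u ++ v.
Proof.
elim: u => [|c u IH] /=; first by rewrite eqxx.
by rewrite inE negb_or eq_sym => /andP [/negbTE -> /IH ->].
Qed.

(** * Inserting the largest letter *)

Section InsertMax.

Variables (n : nat) (u v : seq nat).
Let s := u ++ n.+1 :: v.
Let s' := u ++ v.
Hypothesis perm_s : perm_eq s (iota 1 n.+1).

Lemma size_insert : size s = n.+1.
Proof. by rewrite (perm_size perm_s) size_iota. Qed.

Lemma size_delete : size s' = n.
Proof. by have := size_insert; rewrite /s /s' !size_cat /=; lia. Qed.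

Lemma uniq_insert : uniq s.
Proof. by rewrite (perm_uniq perm_s) iota_uniq. Qed.

Lemma uniq_delete : uniq s'.
Proof. exact: subseq_uniq (cat_subseq (subseq_refl u) (subseq_cons v n.+1)) uniq_insert. Qed.

Lemma max_notin : n.+1 \notin u /\ n.+1 \notin v.
Proof. exact: notin_uniq_mid uniq_insert. Qed.

Lemma mem_delete x : (x \in s') = (1 <= x <= n).
Proof.
have [Hu Hv] := max_notin.
have := perm_mem perm_s x; rewrite /s /s' mem_iota !mem_cat inE.
case: (eqVneq x n.+1) => [->|Hx]; first by rewrite (negbTE Hu) (negbTE Hv); lia.
by rewrite /= => ->; move: Hx; lia.
Qed.

Lemma last_range u0 x : u = rcons u0 x -> 1 <= x <= n.
Proof. by move=> Eu; rewrite -mem_delete /s' Eu mem_cat mem_rcons mem_head. Qed.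

Lemma head_range y v' : v = y :: v' -> 1 <= y <= n.
Proof. by move=> Ev; rewrite -mem_delete /s' Ev mem_cat mem_head orbT. Qed.

Lemma perm_delete : perm_eq s' (iota 1 n).
Proof.
apply: uniq_perm; [exact: uniq_delete | exact: iota_uniq |].
by move=> x; rewrite mem_delete mem_iota; lia.
Qed.

Lemma sigma_prime_insert : sigma_prime s = s'.
Proof. by rewrite /sigma_prime size_insert rem_cat_notin //; case: max_notin. Qed.

Lemma nth_profile_insert i : i < (2 * n).+2 ->
  nth false (profile s) i = nth false (neighbour_steps s (i./2).+1) (odd i).
Proof. by move=> Hi; apply: nth_profile; rewrite size_insert //; lia. Qed.

Lemma nth_profile_delete i : i < 2 * n ->
  nth false (profile s') i = nth false (neighbour_steps s' (i./2).+1) (odd i).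
Proof. by move=> Hi; apply: nth_profile; rewrite size_delete //; exact: perm_delete. Qed.

Lemma lt_next_insert j : j \in s' ->
  (j < next_val s j) = ((u != [::]) && (j == last 0 u)) || (j < next_val s' j).
Proof.
move=> Hj; have Hjn : 1 <= j <= n by rewrite -mem_delete.
have Hu := uniq_insert; have Hu' := uniq_delete; have Hsz := size_delete.
rewrite /s /s' in Hj Hu Hu' Hsz *.
move: Hj Hu Hu' Hsz; rewrite mem_cat => /orP [] /splitPr [a b] Hu Hu' Hsz.
  rewrite -!catA !cat_cons in Hu Hu' *.
  have [Ha Hb] := notin_uniq_mid Hu.
  rewrite !next_val_cat //.
  case: b Hb {Hu Hu' Hsz} => [|c b] Hb /=.
    by rewrite (_ : a ++ [:: j] != [::]) ?last_cat /= ?eqxx //=; [lia | case: a {Ha}].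
  rewrite last_cat /= (_ : (j == last c b) = false) ?andbF //.
  by apply: negbTE; apply/eqP=> Hl; move: Hb; rewrite Hl mem_cat mem_last.
rewrite -[n.+1 :: _]cat_cons in Hu *; rewrite !catA in Hu Hu' Hsz *.
have [Hjs _] := notin_uniq_mid Hu; have [Hjs' _] := notin_uniq_mid Hu'.
rewrite (_ : (u != [::]) && (j == last 0 u) = false) /=; last first.
  case: u Hjs {Hu Hu' Hjs'} => [|c u'] Hjs //=.
  by apply: negbTE; apply/eqP=> Hl; move: Hjs; rewrite Hl mem_cat mem_last.
rewrite !next_val_cat //.
by case: b Hsz {Hu Hu'} => [|c b] //=; rewrite !size_cat /=; lia.
Qed.

Lemma lt_prev_insert j : j \in s' ->
  (j < prev_val s j) = ((v != [::]) && (j == head 0 v)) || (j < prev_val s' j).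
Proof.
move=> Hj; have Hjn : 1 <= j <= n by rewrite -mem_delete.
have Hu := uniq_insert; have Hu' := uniq_delete.
rewrite /s /s' in Hj Hu Hu' *.
move: Hj Hu Hu'; rewrite mem_cat => /orP [] /splitPr [a b] Hu Hu'.
  rewrite -!catA !cat_cons in Hu Hu' *.
  have [Ha Hb] := notin_uniq_mid Hu.
  rewrite !prev_val_cat // (_ : (v != [::]) && (j == head 0 v) = false) //.
  case: v Hb {Hu Hu'} => [|c v'] Hb //=.
  by apply: negbTE; apply/eqP=> Hl; move: Hb; rewrite Hl !mem_cat !inE eqxx !orbT.
rewrite -[n.+1 :: _]cat_cons in Hu *; rewrite !catA in Hu Hu' *.
have [Hjs _] := notin_uniq_mid Hu; have [Hjs' _] := notin_uniq_mid Hu'.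
rewrite !prev_val_cat //.
case: a Hjs {Hu Hu' Hjs'} => [|c a] Hjs /=.
  by rewrite cats0 eqxx last_cat /=; lia.
rewrite !last_cat /= (_ : (j == c) = false) //.
by apply: negbTE; apply/eqP=> Hl; move: Hjs; rewrite Hl mem_cat !inE eqxx !orbT.
Qed.

Lemma prev_val_head y v' : v = y :: v' -> prev_val s' y = last 0 u.
Proof.
move=> Ev; have := uniq_delete; rewrite /s' Ev => Hu.
by rewrite prev_val_cat //; case: (notin_uniq_mid Hu).
Qed.

Lemma next_val_last : u != [::] -> next_val s' (last 0 u) = head n.+1 v.
Proof.
case/lastP Eu: u => [//|u0 x] _; rewrite last_rcons.
have := uniq_delete; have := size_delete; rewrite /s' Eu cat_rcons => Hsz Hu.
by rewrite next_val_cat ?Hsz //; case: (notin_uniq_mid Hu).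
Qed.

Lemma last_neq_head y v' : v = y :: v' -> last 0 u != y.
Proof.
move=> Ev; case/lastP Eu: u => [|u0 x]; first by have := head_range Ev; rewrite /=; lia.
have := uniq_delete; rewrite /s' Ev Eu cat_rcons last_rcons => Hu.
by have [_] := notin_uniq_mid Hu; apply: contra => /eqP ->; rewrite mem_head.
Qed.

(* Indices are 0-based: the first step of [x] is at [2 * x - 2], the second
   step of [y] at [2 * y - 1]; [2 * n] means that no step of [profile s'] flips. *)
Definition flip_pos :=
  if v is y :: _ then
    (if y < last 0 u then 2 * last 0 u - 2 else 2 * y - 1)
  else 2 * n.

Variant flip_pos_spec : nat -> Prop :=
  | FlipEnd of v = [::] : flip_pos_spec (2 * n)
  | FlipAfter u0 x y v' of u = rcons u0 x & v = y :: v' & y < x :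
      flip_pos_spec (2 * x - 2)
  | FlipBefore y v' of v = y :: v' & 0 < y & last 0 u < y :
      flip_pos_spec (2 * y - 1).

Lemma flip_posP : flip_pos_spec flip_pos.
Proof.
rewrite /flip_pos; case Ev: v => [|y v']; first exact: FlipEnd.
case: ifP => Hyx.
  case/lastP Eu: u Hyx => [//|u0 x]; rewrite last_rcons => Hyx.
  exact: FlipAfter Eu Ev Hyx.
have := head_range Ev; have := last_neq_head Ev; move=> Hxy Hy.
by apply: FlipBefore Ev _ _; lia.
Qed.

Lemma flip_pos_le : flip_pos <= 2 * n.
Proof.
case: flip_posP => [_|u0 x y v' /last_range|y v' /head_range] //; lia.
Qed.

Lemma nth_profile_insert_off i : i < 2 * n -> i != flip_pos ->
  nth false (profile s) i = nth false (profile s') i.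
Proof.
move=> Hi Hip; rewrite nth_profile_insert ?nth_profile_delete //; last by lia.
have Hj : (i./2).+1 \in s' by rewrite mem_delete; lia.
rewrite /neighbour_steps; case Ho: (odd i) => /=.
  rewrite lt_prev_insert //; case: ((i./2).+1 =P head 0 v) => [Ejy|]; last by rewrite andbF.
  case: flip_posP Hip => [Ev|u0 x y v' Eu Ev Hyx|y v' Ev _ _] Hip; rewrite Ev //=.
    by rewrite Ejy Ev (prev_val_head Ev) Eu last_rcons Hyx.
  by move: Ejy; rewrite Ev /=; lia.
rewrite lt_next_insert //; case: ((i./2).+1 =P last 0 u) => [Ejx|]; last by rewrite andbF.
case: (u =P [::]) => [//|/eqP Hu] /=.
rewrite Ejx next_val_last //.
case: flip_posP Hip => [Ev|u0 x y v' Eu Ev _|y v' Ev _ Hxy] Hip; rewrite Ev /=.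
- by have := Hj; rewrite mem_delete Ejx; lia.
- by move: Ejx; rewrite Eu last_rcons; lia.
- by rewrite Hxy.
Qed.

Lemma nth_profile_insert_flip : flip_pos < 2 * n ->
  nth false (profile s') flip_pos = false /\ nth false (profile s) flip_pos = true.
Proof.
move=> Hlt; rewrite nth_profile_insert ?nth_profile_delete //; last by lia.
move: Hlt; case: flip_posP => [_|u0 x y v' Eu Ev Hyx|y v' Ev Hy Hxy] Hlt; first by lia.
  have Hx : x \in s' by rewrite /s' Eu mem_cat mem_rcons mem_head.
  have -> : odd (2 * x - 2) = false by lia.
  have -> : (2 * x - 2)./2.+1 = x by lia.
  have Ex : last 0 u = x by rewrite Eu last_rcons.
  have Hu : u != [::] by rewrite Eu -size_eq0 size_rcons.
  rewrite /= lt_next_insert // Hu Ex eqxx -[in next_val _ x]Ex next_val_last // Ev /=.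
  by rewrite ltnNge ltnW.
have Hy' : y \in s' by rewrite /s' Ev mem_cat mem_head orbT.
have -> : odd (2 * y - 1) by lia.
have -> : (2 * y - 1)./2.+1 = y by lia.
by rewrite /= lt_prev_insert // Ev eqxx (prev_val_head Ev) ltnNge ltnW.
Qed.

Lemma nth_profile_insert_end : nth false (profile s) (2 * n) = (flip_pos == 2 * n).
Proof.
have [Hu _] := max_notin.
rewrite nth_profile_insert; last by lia.
have -> : odd (2 * n) = false by lia.
have -> : (2 * n)./2.+1 = n.+1 by lia.
rewrite /= next_val_cat // size_insert.
case: flip_posP => [Ev|u0 x y v' Eu Ev _|y v' Ev _ _]; rewrite Ev /=.
- by rewrite eqxx ltnSn.
- by have := last_range Eu; have := head_range Ev; lia.
- by have := head_range Ev; lia.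
Qed.

Lemma nth_profile_insert_last : nth false (profile s) (2 * n).+1 = false.
Proof.
have [Hu _] := max_notin.
rewrite nth_profile_insert //.
have -> : odd (2 * n).+1 by lia.
have -> : (2 * n).+1./2.+1 = n.+1 by lia.
rewrite /= prev_val_cat //.
case/lastP Eu: u => [//|u0 x]; rewrite last_rcons.
by have := last_range Eu; lia.
Qed.

Lemma flip_pos_lt : v != [::] -> flip_pos < 2 * n.
Proof. by case: flip_posP => [->|u0 x y v' /last_range|y v' /head_range] //; lia. Qed.

Lemma ribbon_sub_insert : dyck (profile s') -> ribbon_sub (profile s') (profile s).
Proof.
have size_D : size (profile s') = 2 * n by rewrite size_profile size_delete.
move=> dyck_D; apply: (@ribbon_sub_flip _ _ flip_pos) dyck_D; rewrite ?size_D.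
- by rewrite size_profile size_insert; lia.
- exact: flip_pos_le.
- by move=> i; exact: nth_profile_insert_off.
- exact: nth_profile_insert_flip.
- exact: nth_profile_insert_end.
- exact: nth_profile_insert_last.
Qed.

Lemma prefix_profile_insert : prefix (profile s') (profile s) -> v = [::].
Proof.
move/prefixP=> [w Ew]; apply/eqP; apply: contraT => Hv.
have [Hs' Hs] := nth_profile_insert_flip (flip_pos_lt Hv).
by move: Hs; rewrite Ew nth_cat size_profile size_delete flip_pos_lt // Hs'.
Qed.

Lemma profile_insert_diff i : i < 2 * n ->
  nth false (profile s') i != nth false (profile s) i -> i = flip_pos.
Proof.
by move=> Hi; apply: contraNeq => Hip; rewrite nth_profile_insert_off // eqxx.
Qed.

End InsertMax.

Lemma dyck_profile n s : perm_eq s (iota 1 n) -> dyck (profile s).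
Proof.
elim: n s => [|n IH] s Hp.
  have -> : s = [::] by apply: size0nil; rewrite (perm_size Hp).
  by apply/dyck_height; split=> [x|]; [rewrite leqn0 => /eqP ->; rewrite height0 | exact: height0].
have Hm : n.+1 \in s by rewrite (perm_mem Hp) mem_iota; lia.
case/splitPr: Hm Hp => u v Hp.
by have [] := ribbon_sub_insert Hp (IH _ (perm_delete Hp)).
Qed.

Theorem mainTheorem6 (n : nat) (s : seq nat) :
  (1 <= n)%N -> is_perm_word n s ->
  ribbon_sub (profile (sigma_prime s)) (profile s) /\
  (prefix (profile (sigma_prime s)) (profile s) -> s = rcons (sigma_prime s) n) /\
  (forall k : nat,
     (1 <= k <= size (profile (sigma_prime s)))%N ->
     (forall i : nat, (i < k.-1)%N ->
        nth false (profile (sigma_prime s)) i = nth false (profile s) i) ->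
     nth false (profile (sigma_prime s)) k.-1 != nth false (profile s) k.-1 ->
     (odd k -> exists u v : seq nat,
        sigma_prime s = u ++ k.+1./2 :: v /\ s = u ++ k.+1./2 :: n :: v) /\
     (~~ odd k -> exists u v : seq nat,
        sigma_prime s = u ++ k./2 :: v /\ s = u ++ n :: k./2 :: v)).
Proof.
case: n => [//|n] _ Hp.
have Hm : n.+1 \in s by rewrite (perm_mem Hp) mem_iota; lia.
case/splitPr: Hm Hp => u v Hp.
rewrite (sigma_prime_insert Hp).
split; first exact: ribbon_sub_insert Hp (dyck_profile (perm_delete Hp)).
split=> [/(prefix_profile_insert Hp) ->|k Hk _ Hdiff]; first by rewrite cats0 cats1.
rewrite size_profile (size_delete Hp) in Hk.
(* The two profiles differ in a single position. *)
have : k.-1 = flip_pos n u v by apply: profile_insert_diff Hp _ _ Hdiff; lia.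
case: (flip_posP Hp) => [_|u0 x y v' Eu Ev Hyx|y v' Ev Hy _] Ek; try lia.
- have -> : k.+1./2 = x by lia.
  split=> Hodd; last by lia.
  by exists u0, (y :: v'); rewrite Eu Ev !cat_rcons.
- have -> : k./2 = y by lia.
  split=> Hodd; first by lia.
  by exists u, v'; rewrite Ev.
Qed.
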